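(* For an idempotent semiring $S$ the following are equivalent: (1) $S$ satisfies both $xyz\approx xzy$ and $x\approx xyx+x+xyx$; (2) $S$ satisfies $xz\approx xzy+xz+xzy$; (3) $\mathcal{L}^{\bullet}$ is the least distributive lattice congruence on $S$ (equivalently, $S$ satisfies $x\approx xy+x+xy$). In particular, for such $S$ the multiplicative reduct $(S,\cdot)$ is a left normal band.
   Context: An idempotent semiring is an algebra $(S,+,\cdot)$ with $(S,+)$, $(S,\cdot)$ bands and both distributive laws; addition not assumed commutative. $a\,\mathcal{L}^{\bullet}\,b$ iff $ab=a$ and $ba=b$. A distributive lattice congruence is a congruence $\rho$ with $S/\rho$ satisfying $x+y\approx y+x$, $xy\approx yx$, $x+xy\approx x$. A left normal band is a band satisfying $xyz\approx xzy$. *)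

Section Defs.
Context {S : Type}.

(* (S,+,.) is an idempotent semiring: both reducts are bands (associative and
   idempotent semigroups) and both distributive laws hold.  Addition is not
   assumed commutative. *)
Definition idempotent_semiring (add mul : S -> S -> S) : Prop :=
  (forall x y z, add x (add y z) = add (add x y) z) /\
  (forall x, add x x = x) /\
  (forall x y z, mul x (mul y z) = mul (mul x y) z) /\
  (forall x, mul x x = x) /\
  (forall x y z, mul x (add y z) = add (mul x y) (mul x z)) /\
  (forall x y z, mul (add x y) z = add (mul x z) (mul y z)).

Definition Lbullet (mul : S -> S -> S) (a b : S) : Prop :=
  mul a b = a /\ mul b a = b.

Definition congruence (add mul : S -> S -> S) (rho : S -> S -> Prop) : Prop :=
  (forall x, rho x x) /\
  (forall x y, rho x y -> rho y x) /\
  (forall x y z, rho x y -> rho y z -> rho x z) /\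
  (forall x y x' y', rho x x' -> rho y y' -> rho (add x y) (add x' y')) /\
  (forall x y x' y', rho x x' -> rho y y' -> rho (mul x y) (mul x' y')).

(* distributive lattice congruence: S/rho satisfies x+y = y+x, xy = yx,
   x + xy = x (written out on representatives) *)
Definition dl_congruence (add mul : S -> S -> S) (rho : S -> S -> Prop) : Prop :=
  congruence add mul rho /\
  (forall x y, rho (add x y) (add y x)) /\
  (forall x y, rho (mul x y) (mul y x)) /\
  (forall x y, rho (add x (mul x y)) x).

Definition least_dl_congruence (add mul : S -> S -> S) (rho : S -> S -> Prop) : Prop :=
  dl_congruence add mul rho /\
  (forall sigma, dl_congruence add mul sigma -> forall x y, rho x y -> sigma x y).

(* left normal band: xyz = xzy (the band axioms are part of idempotent_semiring) *)
Definition left_normal (mul : S -> S -> S) : Prop :=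
  forall x y z, mul x (mul y z) = mul x (mul z y).

End Defs.

(** The identity [x = xy + x + xy] yields the absorption laws [x + xy = x = xy + x];
    multiplying [xy + x = x] on the left by [xy] makes [(S,.)] left regular
    ([xyx = xy]).  Squaring [xy + xz] then gives [xy + xz = xy + xyz + xzy + xz],
    and multiplying this on the right by [y] and [z] in both orders shows that
    [xyz] and [xzy] both equal [xyz + xzy]: the band is left normal.  In a left
    normal, left regular band the relation [L•] is compatible with both
    operations and identifies [xy] with [yx]; conversely every distributive
    lattice congruence contains [L•], since [a L• b] means [a = ab] and [b = ba].
    Finally, [L•] being a distributive lattice congruence forces the absorption
    laws, hence the identity. *)

From Corelib Require Import ssreflect ssrfun.

Section IdempotentSemiring.
Context {S : Type} {add mul : S -> S -> S}.
Hypothesis HS : idempotent_semiring add mul.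

Let addA : forall x y z, add x (add y z) = add (add x y) z := proj1 HS.
Let addxx : forall x, add x x = x := proj1 (proj2 HS).
Let mulA : forall x y z, mul x (mul y z) = mul (mul x y) z := proj1 (proj2 (proj2 HS)).
Let mulxx : forall x, mul x x = x := proj1 (proj2 (proj2 (proj2 HS))).
Let mulDr : forall x y z, mul x (add y z) = add (mul x y) (mul x z) :=
  proj1 (proj2 (proj2 (proj2 (proj2 HS)))).
Let mulDl : forall x y z, mul (add x y) z = add (mul x z) (mul y z) :=
  proj2 (proj2 (proj2 (proj2 (proj2 HS)))).

Section AbsorptionIdentity.
Hypothesis absorb : forall x y, x = add (add (mul x y) x) (mul x y).

Lemma add_mul_absorb x y : add x (mul x y) = x.
Proof. by rewrite {1}(absorb x y) -(addA _ (mul x y)) addxx -absorb. Qed.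

Lemma add_mul_absorb_l x y : add (mul x y) x = x.
Proof. by rewrite {2}(absorb x y) !addA addxx -absorb. Qed.

Lemma mul_left_regular x y : mul x (mul y x) = mul x y.
Proof.
have xyx : mul (mul x y) x = mul (mul x y) (add (mul x y) x) by rewrite add_mul_absorb_l.
by rewrite mulDr mulxx add_mul_absorb in xyx; rewrite mulA.
Qed.

Lemma mul_prefix_regular x y z : mul (mul x y) (mul x z) = mul x (mul y z).
Proof. by rewrite mulA -(mulA x y x) mul_left_regular -mulA. Qed.

Lemma mul_square_expand x y z :
  add (mul x y) (mul x z) =
  add (add (add (mul x y) (mul x (mul y z))) (mul x (mul z y))) (mul x z).
Proof.
by rewrite -{1}(mulxx (add (mul x y) (mul x z))) mulDl !mulDr !mulxx
  !mul_prefix_regular !addA.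
Qed.

Section LeftNormal.
Variables x y z : S.
Let u := mul x (mul y z).
Let v := mul x (mul z y).

Let uy : mul u y = u.
Proof. by rewrite /u -!mulA mul_left_regular. Qed.
Let uz : mul u z = u.
Proof. by rewrite /u -!mulA mulxx. Qed.
Let vy : mul v y = v.
Proof. by rewrite /v -!mulA mulxx. Qed.
Let vz : mul v z = v.
Proof. by rewrite /v -!mulA mul_left_regular. Qed.

Lemma left_normal_sum_l : u = add u v.
Proof.
have xy_v : add (mul x y) v = mul x y.
  by have := f_equal (mul^~ y) (add_mul_absorb x z); rewrite /= mulDl -mulA.
have := f_equal (mul^~ y) (mul_square_expand x y z).
rewrite /= !mulDl uy vy -!mulA mulxx -/v xy_v -(addA _ v v) addxx => exy.
have := f_equal (mul^~ z) exy.
by rewrite /= !mulDl uz vz -!mulA -/u addxx.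
Qed.

Lemma left_normal_sum_r : v = add u v.
Proof.
have u_xz : add u (mul x z) = mul x z.
  by have := f_equal (mul^~ z) (add_mul_absorb_l x y); rewrite /= mulDl -mulA.
have := f_equal (mul^~ z) (mul_square_expand x y z).
rewrite /= !mulDl uz vz -!mulA mulxx -/u u_xz => exz.
have := f_equal (mul^~ y) exz.
by rewrite /= !mulDl uy vy -!mulA -/v addxx -(addA u v v) addxx.
Qed.

End LeftNormal.

Lemma left_normal_of_absorb : left_normal mul.
Proof. by move=> x y z; rewrite left_normal_sum_l -left_normal_sum_r. Qed.

Lemma Lbullet_add x x' y y' : Lbullet mul x x' -> Lbullet mul y y' ->
  mul (add x y) (add x' y') = add x y.
Proof.
move=> [xx' x'x] [yy' y'y].
have xy' : mul x y' = mul x y by rewrite -{1}y'y left_normal_of_absorb yy'.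
have yx' : mul y x' = mul y x by rewrite -{1}x'x left_normal_of_absorb xx'.
rewrite mulDl !mulDr xx' yy' xy' yx'.
by rewrite -[in RHS](mulxx (add x y)) mulDl !mulDr !mulxx !addA.
Qed.

Lemma Lbullet_mul x x' y y' : Lbullet mul x x' -> Lbullet mul y y' ->
  mul (mul x y) (mul x' y') = mul x y.
Proof.
move=> [xx' _] [yy' _].
by rewrite mulA -(mulA x y x') left_normal_of_absorb mulA xx' -mulA yy'.
Qed.

Lemma Lbullet_dl_congruence : dl_congruence add mul (Lbullet mul).
Proof.
split; first split; [|split; [|split; [|split]]|split; [|split]].
- by move=> x; split; apply: mulxx.
- by move=> x y [xy yx]; split.
- move=> x y z [xy yx] [yz zy]; split.
  + by rewrite -{1}xy -mulA yz.
  + by rewrite -{1}zy -mulA yx.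
- by move=> x y x' y' [? ?] [? ?]; split; apply: Lbullet_add.
- by move=> x y x' y' [? ?] [? ?]; split; apply: Lbullet_mul.
- by move=> x y; split; rewrite mulDl !mulDr !mulxx ?add_mul_absorb ?add_mul_absorb_l.
- move=> x y; split; rewrite -!mulA.
  + by rewrite (mulA y y) mulxx mul_left_regular.
  + by rewrite (mulA x x) mulxx mul_left_regular.
- by move=> x y; rewrite add_mul_absorb; split; apply: mulxx.
Qed.

End AbsorptionIdentity.

Lemma absorb_of_Lbullet_dl_congruence :
  dl_congruence add mul (Lbullet mul) ->
  forall x y, x = add (add (mul x y) x) (mul x y).
Proof.
move=> [_ [add_comm [_ absorb]]] x y.
have [_ absorb_r] := absorb x y.
rewrite mulDr mulxx mulA mulxx in absorb_r.
have [absorb_l _] := add_comm x (mul x y).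
rewrite absorb_r mulDr mulA !mulxx in absorb_l.
by rewrite absorb_l absorb_r.
Qed.

Lemma shifted_absorb_of_left_normal :
  (forall x y z, mul (mul x y) z = mul (mul x z) y) ->
  (forall x y, x = add (add (mul (mul x y) x) x) (mul (mul x y) x)) ->
  forall x y z, mul x z = add (add (mul (mul x z) y) (mul x z)) (mul (mul x z) y).
Proof.
move=> normal absorb x y z.
have xzyxz : mul (mul (mul x z) y) (mul x z) = mul (mul x z) y.
  by rewrite mulA (normal (mul x z) y x) (normal x z x) mulxx
    (normal (mul x z) y z) -(mulA x z z) mulxx.
by rewrite {1}(absorb (mul x z) y) xzyxz.
Qed.

End IdempotentSemiring.

Lemma Lbullet_sub_dl_congruence (S : Type) (add mul : S -> S -> S) sigma :
  dl_congruence add mul sigma -> forall x y, Lbullet mul x y -> sigma x y.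
Proof. by move=> [_ [_ [mul_comm _]]] x y [xy yx]; have := mul_comm x y; rewrite xy yx. Qed.

Theorem theorem4p8 (S : Type) (add mul : S -> S -> S)
  (HS : idempotent_semiring add mul) :
  let c1 := (forall x y z, mul (mul x y) z = mul (mul x z) y) /\
            (forall x y, x = add (add (mul (mul x y) x) x) (mul (mul x y) x)) in
  let c2 := forall x y z, mul x z = add (add (mul (mul x z) y) (mul x z)) (mul (mul x z) y) in
  let c3 := least_dl_congruence add mul (Lbullet mul) in
  let c3' := forall x y, x = add (add (mul x y) x) (mul x y) in
  ((c1 <-> c2) /\ (c2 <-> c3) /\ (c3 <-> c3')) /\
  (c1 -> left_normal mul).
Proof.
have [_ [_ [mulA [mulxx _]]]] := HS.
move=> c1 c2 c3 c3'.
have c1_c2 : c1 -> c2 by case=> normal absorb; apply: shifted_absorb_of_left_normal.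
have c2_c3' : c2 -> c3' by move=> shifted x y; have := shifted x y x; rewrite !mulxx.
have c3'_c2 : c3' -> c2 by move=> absorb x y z; apply: absorb.
have c3'_c1 : c3' -> c1.
{ move=> absorb; split=> [x y z | x y].
  - by rewrite -!mulA (left_normal_of_absorb HS absorb).
  - by rewrite -mulA (mul_left_regular HS absorb); apply: absorb. }
have c3'_c3 : c3' -> c3.
{ move=> absorb; split; first exact: Lbullet_dl_congruence.
  exact: Lbullet_sub_dl_congruence. }
have c3_c3' : c3 -> c3' by case=> dl _; exact: absorb_of_Lbullet_dl_congruence.
split; first by tauto.
by move=> [normal _] x y z; rewrite !mulA normal.
Qed.
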